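(* Let $A\in \mathbb{R}^{m\times n}$ be such that $e=(1,1,\dots,1)^{t}\in \mathcal{R}(A)$ and $A^{\dagger}\geq 0$. Let $A=P_{1}-R_{1}+S_{1}$ be a weak regular proper double splitting of $A$, and let $A=P_{2}-R_{2}+S_{2}$ be a regular proper double splitting of $A$ such that $P_{2}^{\dagger}$ has no zero row and $P_{2}P_{2}^{\dagger}\geq 0$. Define $$W_{1}=\begin{pmatrix} P_{1}^{\dagger}R_{1} & -P_{1}^{\dagger}S_{1}\\ I & 0\end{pmatrix},\qquad W_{2}=\begin{pmatrix} P_{2}^{\dagger}R_{2} & -P_{2}^{\dagger}S_{2}\\ I & 0\end{pmatrix}\in\mathbb{R}^{2n\times 2n},$$ where $I$ is the $n\times n$ identity matrix. If $P_{1}^{\dagger}\geq P_{2}^{\dagger}$ and at least one of the conditions (i) $P_{1}^{\dagger}R_{1}\geq P_{2}^{\dagger}R_{2}$, (ii) $P_{1}^{\dagger}S_{1}\geq P_{2}^{\dagger}S_{2}$ holds, then $\rho(W_{1})\leq \rho(W_{2})< 1$.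
   Context: $A^{\dagger}$ denotes the Moore–Penrose inverse of $A$ and $\mathcal{R}(A)$ its range. For real matrices, $B\geq 0$ means all entries of $B$ are nonnegative, and $B\geq C$ means $B-C\geq 0$. $\rho(\cdot)$ denotes the spectral radius. For $A\in\mathbb{R}^{m\times n}$, a decomposition $A=P-R+S$ with $P,R,S\in\mathbb{R}^{m\times n}$ is a proper double splitting if $\mathcal{R}(A)=\mathcal{R}(P)$ and $\mathcal{N}(A)=\mathcal{N}(P)$. A proper double splitting is called regular if $P^{\dagger}\geq 0$, $R\geq 0$ and $-S\geq 0$; it is called weak regular if $P^{\dagger}\geq 0$, $P^{\dagger}R\geq 0$ and $-P^{\dagger}S\geq 0$. *)

From HB Require Import structures.
From mathcomp Require Import all_boot all_order all_algebra.
From mathcomp Require Import boolp classical_sets reals.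
From mathcomp Require Import complex.
Set Implicit Arguments. Unset Strict Implicit. Unset Printing Implicit Defensive.
Import Order.TTheory GRing.Theory Num.Theory.
Local Open Scope ring_scope.

Section Defs.
Variable R : realType.

Definition is_pinv m n (A : 'M[R]_(m, n)) (X : 'M[R]_(n, m)) : Prop :=
  [/\ A *m X *m A = A, X *m A *m X = X,
      (A *m X)^T = A *m X & (X *m A)^T = X *m A].

(* A^dagger: the (unique, always existing) Moore-Penrose inverse *)
Definition pinv m n (A : 'M[R]_(m, n)) : 'M[R]_(n, m) :=
  xget 0 (fun X => is_pinv A X).

Definition in_range m n (A : 'M[R]_(m, n)) (y : 'cV[R]_m) : Prop :=
  exists x : 'cV[R]_n, y = A *m x.

Definition in_null m n (A : 'M[R]_(m, n)) (x : 'cV[R]_n) : Prop :=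
  A *m x = 0.

Definition mx_nonneg m n (B : 'M[R]_(m, n)) : Prop := forall i j, 0 <= B i j.
Definition mx_ge m n (B C : 'M[R]_(m, n)) : Prop := mx_nonneg (B - C).

Definition proper_double_splitting m n (A P Rm S : 'M[R]_(m, n)) : Prop :=
  [/\ A = P - Rm + S,
      (forall y, in_range A y <-> in_range P y) &
      (forall x, in_null A x <-> in_null P x)].

Definition regular_pds m n (A P Rm S : 'M[R]_(m, n)) : Prop :=
  [/\ proper_double_splitting A P Rm S,
      mx_nonneg (pinv P), mx_nonneg Rm & mx_nonneg (- S)].

Definition weak_regular_pds m n (A P Rm S : 'M[R]_(m, n)) : Prop :=
  [/\ proper_double_splitting A P Rm S,
      mx_nonneg (pinv P), mx_nonneg (pinv P *m Rm) & mx_nonneg (- (pinv P *m S))].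

Definition spectral_radius k (W : 'M[R]_k) : R :=
  sup [set Normc.normc z | z in [set z : R[i] | eigenvalue (map_mx (real_complex R) W) z]].

Definition iter_mx m n (P Rm S : 'M[R]_(m, n)) : 'M[R]_(n + n) :=
  block_mx (pinv P *m Rm) (- (pinv P *m S)) 1%:M 0.

Definition no_zero_row m n (B : 'M[R]_(m, n)) : Prop :=
  forall i, exists j, B i j != 0.
End Defs.

From HB Require Import structures.
From mathcomp Require Import all_boot all_order all_algebra.
From mathcomp Require Import boolp classical_sets reals complex.
From mathcomp.algebra_tactics Require Import ring lra.
Import Order.TTheory GRing.Theory Num.Theory.
Local Open Scope ring_scope.
Set Implicit Arguments. Unset Strict Implicit. Unset Printing Implicit Defensive.

(* Put [X_k = P_k^+ R_k] and [Y_k = - P_k^+ S_k], so that [W_k] is the companion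
   matrix of the quadratic pencil [t^2 I - t X_k - Y_k].  For nonnegative [X, Y], a
   positive vector [v] with [s X v + Y v <= s^2 v] bounds the moduli of all
   eigenvalues of the companion matrix by [s] (a left eigenvector for [z] yields a
   nonnegative row [u] with [|z|^2 u <= u (|z| X + Y)]), and a singular pencil at
   [t] makes [t] an eigenvalue.
   For the second splitting, [z = A^+ e] satisfies [(X_2 + Y_2) z = z - P_2^+ e]
   with [P_2^+ e > 0]; this gives [rho(W_2) < 1] and a nonnegative inverse of the
   pencil at [t = 1].  For [rho(W_2) < s < 1] the pencil is invertible on [[s, 1]],
   so by a connectedness argument its inverse is still nonnegative at [s], and
   [v = pencil(s)^-1 P_2^+ e] is positive.  Regularity of the second splitting gives
   [A v >= 0], hence [P_1^+ A v >= P_2^+ A v], and either comparison hypothesis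
   turns this into [s X_1 v + Y_1 v <= s^2 v], i.e. [rho(W_1) <= s]. *)

Section Gram.
Variable F : realFieldType.

Lemma mul_row_tr_eq0 k (y : 'rV[F]_k) : y *m y^T = 0 -> y = 0.
Proof.
move=> /matrixP /(_ 0 0); rewrite !mxE => yyt0; apply/rowP => i.
have sum_sq0 : \sum_j y 0 j ^+ 2 = 0.
  by rewrite -[RHS]yyt0; apply: eq_bigr => j _; rewrite mxE -expr2.
have /eqP := psumr_eq0P (fun j _ => sqr_ge0 (y 0 j)) sum_sq0 (i := i) isT.
by rewrite sqrf_eq0 mxE => /eqP.
Qed.

Lemma row_free_gram_unitmx k l (G : 'M[F]_(k, l)) :
  row_free G -> G *m G^T \in unitmx.
Proof.
move=> freeG; rewrite -row_free_unit; apply: inj_row_free => v.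
rewrite mulmxA => vGGt0.
have : (v *m G) *m (v *m G)^T = 0 by rewrite trmx_mul mulmxA vGGt0 mul0mx.
by move/mul_row_tr_eq0/eqP; rewrite mulmx_free_eq0 // => /eqP.
Qed.

End Gram.

Section PseudoInverse.
Variable R : realType.

(* From a full-rank factorisation M = F G one gets
   M^dagger = G^T (G G^T)^-1 (F^T F)^-1 F^T. *)
Lemma pinv_exists m n (M : 'M[R]_(m, n)) : exists X, is_pinv M X.
Proof.
have [r [F [G [<- freeG freeFt]]]] : exists r (F : 'M[R]_(m, r)) (G : 'M[R]_(r, n)),
    [/\ F *m G = M, row_free G & row_free F^T].
  exists (\rank M), (col_base M), (row_base M); split.
  - exact: mulmx_base.
  - exact: row_base_free.
  - by rewrite /row_free mxrank_tr; exact: col_base_full.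
set iG := invmx (G *m G^T); set iF := invmx (F^T *m F).
have iGt : iG^T = iG by rewrite /iG trmx_inv trmx_mul trmxK.
have iFt : iF^T = iF by rewrite /iF trmx_inv trmx_mul trmxK.
have GiG p (Z : 'M[R]_(r, p)) : G *m (G^T *m (iG *m Z)) = Z.
  by rewrite !mulmxA mulmxV ?row_free_gram_unitmx ?mul1mx.
have iFF p (Z : 'M[R]_(r, p)) : iF *m (F^T *m (F *m Z)) = Z.
  have unitFtF : F^T *m F \in unitmx by have := row_free_gram_unitmx freeFt; rewrite trmxK.
  by rewrite 2!mulmxA mulVmx ?mul1mx.
exists (G^T *m iG *m iF *m F^T).
have MX : F *m G *m (G^T *m iG *m iF *m F^T) = F *m iF *m F^T by rewrite -!mulmxA GiG.
have XM : G^T *m iG *m iF *m F^T *m (F *m G) = G^T *m iG *m G by rewrite -!mulmxA iFF.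
split.
- by rewrite MX -!mulmxA iFF.
- by rewrite XM -!mulmxA GiG.
- by rewrite MX !trmx_mul trmxK iFt mulmxA.
- by rewrite XM !trmx_mul trmxK iGt mulmxA.
Qed.

Lemma pinvP m n (M : 'M[R]_(m, n)) : is_pinv M (pinv M).
Proof. by apply: xgetPex; exact: pinv_exists. Qed.

End PseudoInverse.

Section OrderedFieldFacts.
Variable F : realFieldType.

Lemma psumr_gt0 (I : finType) (G : I -> F) i0 :
  (forall i, 0 <= G i) -> 0 < G i0 -> 0 < \sum_i G i.
Proof.
move=> G_ge0 G_i0_gt0; rewrite lt_def sumr_ge0 // andbT psumr_neq0 //.
by apply/hasP; exists i0; rewrite ?mem_index_enum.
Qed.

Lemma uniform_small_factor (I : finType) (c y : I -> F) :
  (forall i, 0 <= c i) -> (forall i, 0 < y i) ->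
  exists2 d : F, 0 < d & d <= 1 /\ forall i, d * c i < y i.
Proof.
move=> c_ge0 y_gt0; set S := \sum_i c i / y i.
have ratio_ge0 i : 0 <= c i / y i by rewrite divr_ge0 // ltW.
have le_ratio_S i : c i / y i <= S by rewrite /S (bigD1 i) //= lerDl sumr_ge0.
have S_ge0 : 0 <= S by rewrite sumr_ge0.
exists (1 / (1 + S)); first by rewrite divr_gt0 //; lra.
split; first by rewrite ler_pdivrMr ?mul1r; lra.
move=> i; rewrite mul1r mulrC ltr_pdivrMr; last lra.
have := le_ratio_S i; rewrite ler_pdivrMr // => ?.
have := y_gt0 i; nra.
Qed.

Lemma pencil_ineq_lt (s l x y w : F) :
  0 < s -> s < l -> 0 <= x -> 0 <= y -> 0 < w ->
  s * x + y <= s ^+ 2 * w -> l * x + y < l ^+ 2 * w.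
Proof.
move=> s_gt0 lt_sl x_ge0 y_ge0 w_gt0 le_s.
rewrite -(ltr_pM2l s_gt0).
have le1 : s * (l * x + y) <= l * (s * x + y) by nra.
have le2 : l * (s * x + y) <= l * (s ^+ 2 * w) by rewrite ler_wpM2l //; lra.
have : 0 < s * l * w * (l - s) by rewrite !mulr_gt0 //; lra.
nra.
Qed.

Lemma perturb_scalar (tau t W V d : F) :
  d <= 1 -> d * ((2 * `|tau| + 1) * `|W| + `|V|) < 1 -> `|t - tau| < d ->
  0 < 1 + ((t ^+ 2 - tau ^+ 2) * W - (t - tau) * V).
Proof.
move=> d_le1 d_small lt_d; set D := t - tau.
have -> : (t ^+ 2 - tau ^+ 2) * W - D * V = D * ((D + 2 * tau) * W - V) by rewrite /D; ring.
have D_le1 : `|D| <= 1 by apply: le_trans (ltW lt_d) d_le1.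
have le_c : `|(D + 2 * tau) * W - V| <= (2 * `|tau| + 1) * `|W| + `|V|.
  apply: le_trans (ler_normB _ _) _; rewrite lerD2r normrM ler_wpM2r //.
  by apply: le_trans (ler_normD _ _) _; rewrite normrM ger0_norm //; lra.
have : `|D * ((D + 2 * tau) * W - V)| < 1.
  rewrite normrM; apply: le_lt_trans d_small.
  by rewrite ler_pM // ltW.
by case/ltr_normlP; lra.
Qed.

Lemma comparison_scalar (s v c x1 y1 x2 y2 a1 a2 : F) :
  0 <= s -> s <= 1 -> 0 <= c -> a2 <= a1 ->
  s ^+ 2 * v = c + (s * x2 + y2) -> x1 + y1 = v - a1 -> x2 + y2 = v - a2 ->
  x2 <= x1 \/ y1 <= y2 -> s * x1 + y1 <= s ^+ 2 * v.
Proof.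
move=> s_ge0 s_le1 c_ge0 le_a ev e1 e2 [le_x | le_y].
  have : 0 <= (1 - s) * (x1 - x2) by rewrite mulr_ge0 // subr_ge0.
  lra.
have : 0 <= (1 - s) * (y2 - y1) by rewrite mulr_ge0 // subr_ge0.
have : 0 <= s * (a1 - a2) by rewrite mulr_ge0 // subr_ge0.
have : s * x1 + s * y1 = s * v - s * a1 by rewrite -mulrDr e1 mulrBr.
have : s * x2 + s * y2 = s * v - s * a2 by rewrite -mulrDr e2 mulrBr.
lra.
Qed.

End OrderedFieldFacts.

Section NonnegMatrix.
Variable R : realType.

Definition mx_pos m n (B : 'M[R]_(m, n)) : Prop := forall i j, 0 < B i j.

Definition inv_nonneg n (M : 'M[R]_n) : Prop := M \in unitmx /\ mx_nonneg (invmx M).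

Lemma mx_nonneg_mul m n p (A : 'M[R]_(m, n)) (B : 'M[R]_(n, p)) :
  mx_nonneg A -> mx_nonneg B -> mx_nonneg (A *m B).
Proof. by move=> A_ge0 B_ge0 i j; rewrite mxE sumr_ge0 // => k _; rewrite mulr_ge0. Qed.

Lemma mx_nonneg_add m n (A B : 'M[R]_(m, n)) :
  mx_nonneg A -> mx_nonneg B -> mx_nonneg (A + B).
Proof. by move=> A_ge0 B_ge0 i j; rewrite mxE addr_ge0. Qed.

Lemma mx_nonneg_scale m n a (A : 'M[R]_(m, n)) :
  0 <= a -> mx_nonneg A -> mx_nonneg (a *: A).
Proof. by move=> a_ge0 A_ge0 i j; rewrite mxE mulr_ge0. Qed.

Lemma mx_nonneg_const m n a : 0 <= a -> mx_nonneg (const_mx a : 'M[R]_(m, n)).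
Proof. by move=> a_ge0 i j; rewrite mxE. Qed.

Lemma mx_ge_mul m n p (B C : 'M[R]_(m, n)) (M : 'M[R]_(n, p)) :
  mx_ge B C -> mx_nonneg M -> forall i j, (C *m M) i j <= (B *m M) i j.
Proof.
move=> BC M_ge0 i j; rewrite -subr_ge0.
have -> : (B *m M) i j - (C *m M) i j = ((B - C) *m M) i j by rewrite mulmxBl !mxE.
exact: mx_nonneg_mul.
Qed.

Lemma mx_pos_nonneg m n (B : 'M[R]_(m, n)) : mx_pos B -> mx_nonneg B.
Proof. by move=> B_gt0 i j; exact: ltW. Qed.

(* Pairing with the positive vector [v] turns [s u <= u B] and [B v < s v]
   into [s (u v) <= u B v < s (u v)] unless [u = 0]. *)
Lemma subinvariant_row_eq0 n (B : 'M[R]_n) (v : 'cV[R]_n) (u : 'rV[R]_n) s :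
  mx_nonneg B -> mx_pos v -> (forall i, (B *m v) i 0 < s * v i 0) ->
  mx_nonneg u -> (forall j, s * u 0 j <= (u *m B) 0 j) -> u = 0.
Proof.
move=> B_ge0 v_gt0 Bv_lt u_ge0 sub_u; apply: contra_eq isT => /rV0Pn [i0 ui0_neq0].
have le_suv : s * (u *m v) 0 0 <= (u *m B *m v) 0 0.
  rewrite !mxE mulr_sumr; apply: ler_sum => j _.
  by rewrite mulrA ler_wpM2r // ltW.
have lt_uBv : (u *m (B *m v)) 0 0 < s * (u *m v) 0 0.
  rewrite !mxE mulr_sumr -subr_gt0 -sumrB.
  apply: (@psumr_gt0 _ _ _ i0) => [i|];
    rewrite mulrA [s * _]mulrC -mulrA -mulrBr.
  - by rewrite mulr_ge0 // subr_ge0 ltW.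
  - by rewrite mulr_gt0 ?subr_gt0 // lt0r ui0_neq0 u_ge0.
by rewrite mulmxA in lt_uBv; lra.
Qed.

Section MMatrix.
Variables (n : nat) (B : 'M[R]_n) (v : 'cV[R]_n) (s : R).
Hypotheses (B_ge0 : mx_nonneg B) (v_gt0 : mx_pos v)
  (Bv_lt : forall i, (B *m v) i 0 < s * v i 0).

(* Apply [subinvariant_row_eq0] to the negative part of [a]. *)
Lemma Mmatrix_row_ge0 (a : 'rV[R]_n) :
  mx_nonneg (a *m (s%:M - B)) -> mx_nonneg a.
Proof.
move=> aM_ge0; pose u := \row_k (- Num.min (a 0 k) 0).
have u_ge0 : mx_nonneg u by move=> i k; rewrite mxE oppr_ge0 ge_min lexx orbT.
have a_ge_u : mx_nonneg (a + u).
  by move=> i k; rewrite !mxE (ord1 i) subr_ge0 ge_min lexx.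
have sub_u j : s * u 0 j <= (u *m B) 0 j.
  have uB_ge0 := mx_nonneg_mul u_ge0 B_ge0 0 j.
  rewrite [u 0 j]mxE; case: (leP 0 (a 0 j)) => [a_ge0 | a_lt0].
    by rewrite oppr0 mulr0.
  have aMj : (a *m (s%:M - B)) 0 j = s * a 0 j - (a *m B) 0 j.
    by rewrite mulmxBr mul_mx_scalar !mxE.
  have auBj : ((a + u) *m B) 0 j = (a *m B) 0 j + (u *m B) 0 j by rewrite mulmxDl mxE.
  have := aM_ge0 0 j; have := mx_nonneg_mul a_ge_u B_ge0 0 j.
  rewrite aMj auBj; lra.
have /rowP u0 := subinvariant_row_eq0 B_ge0 v_gt0 Bv_lt u_ge0 sub_u.
move=> i j; have := u0 j; rewrite !mxE ord1 => /eqP.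
by rewrite oppr_eq0 eq_minr.
Qed.

Lemma Mmatrix_inv_nonneg : inv_nonneg (s%:M - B).
Proof.
have zero_ge0 : mx_nonneg (0 : 'rV[R]_n) by move=> i j; rewrite mxE.
have unitM : s%:M - B \in unitmx.
  rewrite -row_free_unit; apply: inj_row_free => a aM0.
  have a_ge0 : mx_nonneg a by apply: Mmatrix_row_ge0; rewrite aM0.
  have na_ge0 : mx_nonneg (- a) by apply: Mmatrix_row_ge0; rewrite mulNmx aM0 oppr0.
  apply/matrixP => i j; apply/le_anti; rewrite mxE a_ge0 andbT -oppr_ge0.
  by have := na_ge0 i j; rewrite mxE.
split => // i j.
have /Mmatrix_row_ge0 : mx_nonneg (row i (invmx (s%:M - B)) *m (s%:M - B)).
  by rewrite -row_mul mulVmx // => k l; rewrite !mxE ler0n.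
by move/(_ 0 j); rewrite mxE.
Qed.

End MMatrix.

End NonnegMatrix.

Section Normc.
Variable R : rcfType.

Lemma normc_ge0 (z : R[i]) : 0 <= Normc.normc z.
Proof. exact: (@normr_ge0 _ (Rcomplex R)). Qed.

Lemma normc_real (x : R) : 0 <= x -> Normc.normc (x%:C)%C = x.
Proof. by move=> x_ge0; rewrite /= expr0n /= addr0 sqrtr_sqr ger0_norm. Qed.

Lemma normc_sum (I : finType) (G : I -> R[i]) :
  Normc.normc (\sum_i G i) <= \sum_i Normc.normc (G i).
Proof. exact: (@ler_norm_sum _ (Rcomplex R)). Qed.

End Normc.

Section ComplexSpectrum.
Variable R : realType.
Local Notation toC := (map_mx (real_complex R)).

Definition companion_mx n (X Y : 'M[R]_n) : 'M[R]_(n + n) := block_mx X Y 1%:M 0.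

Definition pencil n (X Y : 'M[R]_n) (t : R) : 'M[R]_n := (t ^+ 2)%:M - (t *: X + Y).

Definition eig_bounded k (W : 'M[R]_k) (s : R) : Prop :=
  forall z, eigenvalue (toC W) z -> Normc.normc z <= s.

Lemma companion_eigen_row n (X Y : 'M[R]_n) z :
  eigenvalue (toC (companion_mx X Y)) z ->
  exists2 a : 'rV[R[i]]_n, a != 0 & z ^+ 2 *: a = z *: (a *m toC X) + a *m toC Y.
Proof.
case/eigenvalueP => w; rewrite -(hsubmxK w); move: (lsubmx w) (rsubmx w) => a b.
rewrite map_block_mx map_mx1 map_mx0 mul_row_block scale_row_mx mulmx1 mulmx0 addr0.
case/eq_row_mx => eq_a eq_b w_neq0.
have def_b : b = z *: a - a *m toC X by rewrite -eq_a addrC addKr.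
exists a.
  apply: contra w_neq0 => /eqP a0.
  by rewrite def_b a0 scaler0 mul0mx subr0 row_mx0.
by rewrite eq_b def_b scalerBr scalerA -expr2 addrC subrK.
Qed.

Lemma companion_eigen_nonneg_row n (X Y : 'M[R]_n) z :
  mx_nonneg X -> mx_nonneg Y -> eigenvalue (toC (companion_mx X Y)) z ->
  exists2 u : 'rV[R]_n, u != 0 /\ mx_nonneg u &
    forall j, Normc.normc z ^+ 2 * u 0 j <= (u *m (Normc.normc z *: X + Y)) 0 j.
Proof.
move=> X_ge0 Y_ge0 /companion_eigen_row [a a_neq0 eig_a].
set l := Normc.normc z; pose u := \row_j Normc.normc (a 0 j).
have normc_mul_le (M : 'M[R]_n) j : mx_nonneg M ->
    Normc.normc ((a *m toC M) 0 j) <= (u *m M) 0 j.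
  move=> M_ge0; rewrite !mxE; apply: le_trans (normc_sum _) _.
  by apply: ler_sum => k _; rewrite !mxE Normc.normcM normc_real.
exists u.
  split; last by move=> i j; rewrite mxE normc_ge0.
  apply: contra a_neq0 => /eqP /rowP u0; apply/eqP/rowP => j.
  by have := u0 j; rewrite !mxE => /Normc.eq0_normc.
have normc_z2 : Normc.normc (z ^+ 2) = l ^+ 2 by rewrite expr2 Normc.normcM -expr2.
move=> j; move/rowP/(_ j): eig_a; rewrite 3!mxE => /(congr1 (@Normc.normc R)).
rewrite Normc.normcM normc_z2 [u 0 j]mxE => ->.
apply: le_trans (le_normcD _ _) _; rewrite mulmxDr -scalemxAr [in leRHS]mxE [in leRHS]mxE.
by rewrite Normc.normcM lerD ?ler_wpM2l ?normc_ge0 ?normc_mul_le.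
Qed.

(* If [|z| > s], the strict inequality [(|z| X + Y) v < |z|^2 v] of [pencil_ineq_lt]
   contradicts the nonnegative row of [companion_eigen_nonneg_row]. *)
Lemma companion_eig_bounded n (X Y : 'M[R]_n) (v : 'cV[R]_n) s :
  mx_nonneg X -> mx_nonneg Y -> mx_pos v -> 0 < s ->
  (forall i, s * (X *m v) i 0 + (Y *m v) i 0 <= s ^+ 2 * v i 0) ->
  eig_bounded (companion_mx X Y) s.
Proof.
move=> X_ge0 Y_ge0 v_gt0 s_gt0 sub_v z eig_z.
have [u [u_neq0 u_ge0] sub_u] := companion_eigen_nonneg_row X_ge0 Y_ge0 eig_z.
rewrite leNgt; apply: contra u_neq0 => lt_s_l; apply/eqP.
have B_ge0 : mx_nonneg (Normc.normc z *: X + Y).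
  by apply: mx_nonneg_add => //; apply: mx_nonneg_scale => //; exact: normc_ge0.
apply: (subinvariant_row_eq0 B_ge0 v_gt0 _ u_ge0 sub_u) => i.
rewrite mulmxDl -scalemxAl [in ltLHS]mxE [in ltLHS]mxE.
have v_ge0 := mx_pos_nonneg v_gt0.
apply: pencil_ineq_lt s_gt0 lt_s_l _ _ (v_gt0 i 0) (sub_v i).
  exact: mx_nonneg_mul X_ge0 v_ge0 i 0.
exact: mx_nonneg_mul Y_ge0 v_ge0 i 0.
Qed.

Lemma companion_eigenvalue_of_singular n (X Y : 'M[R]_n) (t : R) :
  pencil X Y t \notin unitmx -> eigenvalue (toC (companion_mx X Y)) (t%:C)%C.
Proof.
rewrite -row_free_unit -kermx_eq0 => /rowV0Pn [a /sub_kermxP aZ0 a_neq0].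
pose b := t *: a - a *m X.
have eig_ab : row_mx a b *m companion_mx X Y = t *: row_mx a b.
  rewrite mul_row_block mulmx1 mulmx0 addr0 scale_row_mx; congr row_mx.
    by rewrite /b addrC subrK.
  move/eqP: aZ0; rewrite /pencil mulmxBr mul_mx_scalar mulmxDr -scalemxAr subr_eq0.
  by move/eqP; rewrite /b scalerBr scalerA -expr2 => ->; rewrite addrC addKr.
apply/eigenvalueP; exists (toC (row_mx a b)); first by rewrite -map_mxM eig_ab map_mxZ.
rewrite map_mx_eq0; apply: contra a_neq0 => /eqP ab0.
by rewrite -row_mx0 in ab0; have [-> _] := eq_row_mx ab0.
Qed.

Lemma spectral_radius_le k (W : 'M[R]_k) s :
  0 <= s -> eig_bounded W s -> spectral_radius W <= s.
Proof.
move=> s_ge0 W_bnd; rewrite /spectral_radius; set S := (X in sup X).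
have [[x Sx] | S0] := pselect (exists x, S x).
  by apply: ge_sup => [|_ [z /W_bnd ? <-]] //; exists x.
suff -> : S = set0 by rewrite sup0.
by apply/seteqP; split => x // Sx; apply: S0; exists x.
Qed.

Lemma eig_bounded_spectral_radius k (W : 'M[R]_k) s :
  eig_bounded W s -> eig_bounded W (spectral_radius W).
Proof.
move=> W_bnd z eig_z; apply: sup_upper_bound; last by exists z.
by split; [exists (Normc.normc z), z | exists s => _ [y /W_bnd ? <-]].
Qed.

Lemma spectral_radius_ge0 k (W : 'M[R]_k) s :
  eig_bounded W s -> 0 <= spectral_radius W.
Proof.
move=> W_bnd; rewrite /spectral_radius; set S := (X in sup X).
have [[_ [z eig_z _]] | S0] := pselect (exists x, S x).
  exact: le_trans (normc_ge0 z) (eig_bounded_spectral_radius W_bnd eig_z).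
suff -> : S = set0 by rewrite sup0.
by apply/seteqP; split => x // Sx; apply: S0; exists x.
Qed.

End ComplexSpectrum.

Section Pencil.
Variables (R : realType) (n : nat) (X Y : 'M[R]_n).
Hypotheses (X_ge0 : mx_nonneg X) (Y_ge0 : mx_nonneg Y).

Lemma pencil_mulmx_shift t tau (w : 'cV[R]_n) :
  pencil X Y t *m w =
  pencil X Y tau *m w + ((t ^+ 2 - tau ^+ 2) *: w - (t - tau) *: (X *m w)).
Proof.
rewrite /pencil !mulmxBl !mul_scalar_mx !mulmxDl -!scalemxAl.
by apply/matrixP => i j; rewrite !mxE; ring.
Qed.

Lemma pencil_mulmxE t (w : 'cV[R]_n) i :
  (pencil X Y t *m w) i 0 = t ^+ 2 * w i 0 - ((t *: X + Y) *m w) i 0.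
Proof. by rewrite /pencil mulmxBl mul_scalar_mx !mxE. Qed.

Lemma pencil_combination_ge0 t (w : 'cV[R]_n) i :
  0 <= t -> mx_nonneg w -> 0 <= ((t *: X + Y) *m w) i 0.
Proof.
move=> t_ge0 w_ge0; apply: mx_nonneg_mul w_ge0 i 0.
by apply: mx_nonneg_add => //; exact: mx_nonneg_scale.
Qed.

Lemma pencil_inv_nonneg_of_pos t (v : 'cV[R]_n) :
  0 <= t -> mx_pos v -> mx_pos (pencil X Y t *m v) -> inv_nonneg (pencil X Y t).
Proof.
move=> t_ge0 v_gt0 Zv_gt0; apply: (Mmatrix_inv_nonneg _ v_gt0) => [|i].
  by apply: mx_nonneg_add => //; exact: mx_nonneg_scale.
by have := Zv_gt0 i 0; rewrite pencil_mulmxE subr_gt0.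
Qed.

Lemma pencil_pos_of_nonneg t (w : 'cV[R]_n) :
  0 < t -> mx_nonneg w -> mx_pos (pencil X Y t *m w) -> mx_pos w.
Proof.
move=> t_gt0 w_ge0 Zw_gt0 i j; rewrite [j]ord1.
have := Zw_gt0 i 0; rewrite pencil_mulmxE.
have := pencil_combination_ge0 i (ltW t_gt0) w_ge0.
have := exprn_gt0 2 t_gt0; nra.
Qed.

Lemma pencil_perturb tau (w : 'cV[R]_n) :
  pencil X Y tau *m w = const_mx 1 ->
  exists2 d : R, 0 < d & forall t, `|t - tau| < d -> mx_pos (pencil X Y t *m w).
Proof.
move=> Zw1; pose c i := (2 * `|tau| + 1) * `|w i 0| + `|(X *m w) i 0|.
have [|d d_gt0 [d_le1 d_small]] := @uniform_small_factor _ _ c (fun=> 1) _ (fun=> ltr01).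
  by move=> i; rewrite /c addr_ge0 ?mulr_ge0 ?addr_ge0 ?mulr_ge0.
exists d => // t lt_d i j; rewrite [j]ord1 (pencil_mulmx_shift _ tau) Zw1.
by move: (perturb_scalar d_le1 (d_small i) lt_d); rewrite !mxE.
Qed.

Lemma pencil_inv_nonneg_open tau :
  0 < tau -> inv_nonneg (pencil X Y tau) ->
  exists2 d : R, 0 < d & forall t, 0 <= t -> `|t - tau| < d -> inv_nonneg (pencil X Y t).
Proof.
move=> tau_gt0 [unitZ invZ_ge0]; pose w : 'cV[R]_n := invmx (pencil X Y tau) *m const_mx 1.
have Zw1 : pencil X Y tau *m w = const_mx 1 by rewrite mulKVmx.
have w_gt0 : mx_pos w.
  apply: (pencil_pos_of_nonneg tau_gt0).
    exact: mx_nonneg_mul invZ_ge0 (mx_nonneg_const ler01).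
  by rewrite Zw1 => i j; rewrite mxE ltr01.
have [d d_gt0 Zw_gt0] := pencil_perturb Zw1.
by exists d => // t t_ge0 /Zw_gt0; exact: pencil_inv_nonneg_of_pos.
Qed.

(* Nonnegativity of [invmx (pencil X Y tau) *m 1] is inherited from points just
   to the right of [tau], where the pencil is still positive on that vector. *)
Lemma pencil_inv_nonneg_closed tau d :
  0 < tau -> pencil X Y tau \in unitmx -> 0 < d ->
  (forall t, tau < t -> t < tau + d -> inv_nonneg (pencil X Y t)) ->
  inv_nonneg (pencil X Y tau).
Proof.
move=> tau_gt0 unitZ d_gt0 inv_right; pose w : 'cV[R]_n := invmx (pencil X Y tau) *m const_mx 1.
have Zw1 : pencil X Y tau *m w = const_mx 1 by rewrite mulKVmx.
have Zw_gt0 : mx_pos (pencil X Y tau *m w) by rewrite Zw1 => i j; rewrite mxE.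
have [d' d'_gt0 Zw_near] := pencil_perturb Zw1.
pose e := Num.min d d' / 2.
have [e_gt0 e_lt_d e_lt_d'] : [/\ 0 < e, e < d & e < d'].
  have : 0 < Num.min d d' by rewrite lt_min d_gt0 d'_gt0.
  have : Num.min d d' <= d by rewrite ge_min lexx.
  have : Num.min d d' <= d' by rewrite ge_min lexx orbT.
  by rewrite /e; split; lra.
have [unitZt invZt_ge0] : inv_nonneg (pencil X Y (tau + e)) by apply: inv_right; lra.
have w_ge0 : mx_nonneg w.
  rewrite -(mulKmx unitZt w); apply: mx_nonneg_mul invZt_ge0 (mx_pos_nonneg (Zw_near _ _)).
  by rewrite addrAC subrr add0r gtr0_norm.
exact: pencil_inv_nonneg_of_pos (ltW tau_gt0) (pencil_pos_of_nonneg tau_gt0 w_ge0 Zw_gt0) Zw_gt0.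
Qed.

(* Let [b] be the supremum of the points of [[s, 1]] where the inverse is not
   nonnegative.  Openness at [1] gives [b < 1], closedness from the right gives a
   nonnegative inverse at [b], and openness at [b] then contradicts [b = sup]. *)
Lemma pencil_inv_nonneg_continuation s :
  0 < s -> s <= 1 -> (forall t, s <= t -> t <= 1 -> pencil X Y t \in unitmx) ->
  inv_nonneg (pencil X Y 1) -> inv_nonneg (pencil X Y s).
Proof.
move=> s_gt0 s_le1 unitZ inv1; apply: contrapT => not_inv_s.
pose bad : set R := fun t => [/\ s <= t, t <= 1 & ~ inv_nonneg (pencil X Y t)].
have bad_sup : has_sup bad by split; [exists s | exists 1 => t []].
set b := sup bad.
have le_b t : bad t -> t <= b by move=> bad_t; exact: sup_upper_bound.
have s_le_b : s <= b by exact: le_b.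
have [d1 d1_gt0 inv_near1] := pencil_inv_nonneg_open ltr01 inv1.
have b_le : b <= 1 - d1.
  apply: ge_sup; first by exists s.
  move=> t [s_le_t t_le1 not_inv_t]; rewrite leNgt; apply: contra_notN not_inv_t => lt_t.
  by apply: inv_near1; rewrite ?ler0_norm; lra.
have inv_b : inv_nonneg (pencil X Y b).
  apply: (@pencil_inv_nonneg_closed _ (1 - b)); [lra | apply: unitZ; lra | lra |].
  move=> t lt_bt lt_t1; apply: contrapT => not_inv_t.
  have : t <= b by apply: le_b; split => //; lra.
  lra.
have [d2 d2_gt0 inv_near_b] := pencil_inv_nonneg_open (lt_le_trans s_gt0 s_le_b) inv_b.
have [t bad_t lt_t] := sup_adherent d2_gt0 bad_sup.
case: (bad_t) => s_le_t _; apply; apply: inv_near_b; first lra.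
have t_le_b := le_b t bad_t; rewrite -/b in lt_t.
by rewrite ler0_norm ?subr_le0 //; lra.
Qed.

End Pencil.

Section SubinvariantVector.
Variables (R : realType) (n : nat) (X Y : 'M[R]_n) (z c : 'cV[R]_n).
Hypotheses (X_ge0 : mx_nonneg X) (Y_ge0 : mx_nonneg Y) (z_ge0 : mx_nonneg z)
  (c_gt0 : mx_pos c) (XYz : (X + Y) *m z = z - c).

Let XYz_entry i : (X *m z) i 0 + (Y *m z) i 0 = z i 0 - c i 0.
Proof. by move/matrixP/(_ i 0): XYz; rewrite mulmxDl !mxE. Qed.

Let z_gt0 : mx_pos z.
Proof.
move=> i j; rewrite [j]ord1; have := XYz_entry i; have := c_gt0 i 0.
by have := mx_nonneg_mul X_ge0 z_ge0 i 0; have := mx_nonneg_mul Y_ge0 z_ge0 i 0; lra.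
Qed.

Let companion_eig_lt1 : exists2 mu : R, 0 <= mu < 1 & eig_bounded (companion_mx X Y) mu.
Proof.
have [d d_gt0 [d_le1 dz_lt_c]] :=
  uniform_small_factor (fun i => z_ge0 i 0) (fun i => c_gt0 i 0).
exists (1 - d / 2); first by apply/andP; split; lra.
apply: (companion_eig_bounded X_ge0 Y_ge0 z_gt0); first lra.
move=> i; have := XYz_entry i; have := dz_lt_c i.
have := mx_nonneg_mul X_ge0 z_ge0 i 0; have := mx_nonneg_mul Y_ge0 z_ge0 i 0.
have : (1 - d) * z i 0 <= (1 - d / 2) ^+ 2 * z i 0 by rewrite ler_wpM2r //; nra.
have : (1 - d / 2) * (X *m z) i 0 <= (X *m z) i 0.
  by rewrite ler_piMl ?mx_nonneg_mul //; lra.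
lra.
Qed.

Lemma companion_eig_bounded_spectral_radius :
  eig_bounded (companion_mx X Y) (spectral_radius (companion_mx X Y)).
Proof.
by have [mu _ W_mu] := companion_eig_lt1; exact: eig_bounded_spectral_radius W_mu.
Qed.

Lemma companion_spectral_radius_lt1 : spectral_radius (companion_mx X Y) < 1.
Proof.
have [mu /andP [mu_ge0 mu_lt1] W_mu] := companion_eig_lt1.
exact: le_lt_trans (spectral_radius_le mu_ge0 W_mu) mu_lt1.
Qed.

Lemma pencil1_inv_nonneg : inv_nonneg (pencil X Y 1).
Proof.
apply: (pencil_inv_nonneg_of_pos X_ge0 Y_ge0 ler01 z_gt0) => i j.
by rewrite [j]ord1 pencil_mulmxE expr1n mul1r scale1r XYz !mxE; have := c_gt0 i 0; lra.
Qed.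

End SubinvariantVector.

Section ProperSplitting.
Variables (R : realType) (m n : nat).
Implicit Types (A P Rm S : 'M[R]_(m, n)).

Lemma null_sub_mulmx_eq0 k p (A : 'M[R]_(k, n)) P (M : 'M[R]_(n, p)) :
  (forall x, in_null P x -> in_null A x) -> P *m M = 0 -> A *m M = 0.
Proof.
move=> nullPA PM0; apply/matrixP => i j.
have /nullPA : in_null P (col j M) by rewrite /in_null colE mulmxA PM0 mul0mx.
by rewrite /in_null colE mulmxA -colE => /colP /(_ i); rewrite !mxE.
Qed.

Lemma mulmx_pinv_projK k (A : 'M[R]_(k, n)) P :
  (forall x, in_null P x -> in_null A x) -> A *m (pinv P *m P) = A.
Proof.
have [PQP _ _ _] := pinvP P; move=> nullPA.
have : A *m (1%:M - pinv P *m P) = 0.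
  by apply: null_sub_mulmx_eq0 nullPA _; rewrite mulmxBr mulmx1 mulmxA PQP subrr.
by rewrite mulmxBr mulmx1 => /eqP; rewrite subr_eq0 => /eqP.
Qed.

Lemma pinv_projK_range A P :
  (forall y, in_range A y -> in_range P y) -> P *m pinv P *m A = A.
Proof.
have [PQP _ _ _] := pinvP P; move=> rangeAP; apply/matrixP => i j.
have [x Ax] : in_range P (col j A) by apply: rangeAP; exists (delta_mx j 0); rewrite colE.
have : col j (P *m pinv P *m A) = col j A by rewrite colE -mulmxA -colE Ax !mulmxA PQP.
by move/colP/(_ i); rewrite !mxE.
Qed.

(* [pinv P *m P] is the orthogonal projector onto the row space of [P], which
   contains that of [A] and hence the range of [pinv A = A^T (pinv A)^T pinv A]. *)
Lemma pinv_proj_pinv k (A : 'M[R]_(k, n)) P :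
  (forall x, in_null P x -> in_null A x) -> pinv P *m P *m pinv A = pinv A.
Proof.
have [_ _ _ QP_sym] := pinvP P; have [_ AdAAd _ AdA_sym] := pinvP A.
move=> /mulmx_pinv_projK AQP.
have QPAt : pinv P *m P *m A^T = A^T by rewrite -{1}QP_sym -trmx_mul AQP.
have -> : pinv A = A^T *m ((pinv A)^T *m pinv A) by rewrite mulmxA -trmx_mul AdA_sym AdAAd.
by rewrite mulmxA QPAt.
Qed.

Lemma splitting_iter_sum A P Rm S :
  A = P - Rm + S -> pinv P *m Rm + - (pinv P *m S) = pinv P *m P - pinv P *m A.
Proof. by move=> ->; rewrite mulmxDr mulmxBr opprD addrA subKr. Qed.

End ProperSplitting.

(* With [K = P Q]: [s^2 A v = y + s (1 - s) K Rm v + (1 - s^2) K (- S) v]. *)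
Lemma regular_splitting_mulmx_ge0 (R : realType) m n (A P Rm S : 'M[R]_(m, n))
    (Q : 'M[R]_(n, m)) (y : 'cV[R]_m) (v : 'cV[R]_n) s :
  A = P - Rm + S -> P *m Q *m P = P -> P *m Q *m A = A -> P *m Q *m y = y ->
  mx_nonneg (P *m Q) -> mx_nonneg Rm -> mx_nonneg (- S) -> mx_nonneg y ->
  mx_nonneg v -> 0 < s -> s <= 1 ->
  s ^+ 2 *: v = Q *m (y + s *: (Rm *m v) - S *m v) -> mx_nonneg (A *m v).
Proof.
move=> defA PQP PQA PQy PQ_ge0 Rm_ge0 S_le0 y_ge0 v_ge0 s_gt0 s_le1 eq_v.
set r := P *m Q *m (Rm *m v); set q := P *m Q *m (S *m v).
have r_ge0 : mx_nonneg r by apply: mx_nonneg_mul => //; exact: mx_nonneg_mul.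
have q_le0 : mx_nonneg (- q).
  by rewrite /q -mulmxN -mulNmx; apply: mx_nonneg_mul => //; exact: mx_nonneg_mul.
have sPv : s ^+ 2 *: (P *m v) = y + s *: r - q.
  by rewrite scalemxAr eq_v mulmxA mulmxBr mulmxDr PQy -scalemxAr.
have Av : A *m v = P *m v - r + q.
  by rewrite -PQA defA !mulmxDr mulmxN PQP !mulmxDl mulNmx /r /q !mulmxA.
have key : s ^+ 2 *: (A *m v) = y + (s * (1 - s)) *: r + (1 - s ^+ 2) *: (- q).
  rewrite Av scalerDr scalerBr sPv.
  by apply/matrixP => i j; rewrite !mxE; ring.
have : mx_nonneg (s ^+ 2 *: (A *m v)).
  rewrite key; apply: mx_nonneg_add; first apply: mx_nonneg_add => //.
    by apply: mx_nonneg_scale => //; rewrite mulr_ge0 ?subr_ge0 // ltW.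
  by apply: mx_nonneg_scale => //; rewrite subr_ge0 expr_le1 // ltW.
by move=> sAv_ge0 i j; have := sAv_ge0 i j; rewrite mxE pmulr_rge0 // exprn_gt0.
Qed.

Section Comparison.
Variables (R : realType) (m n : nat) (A P1 R1 S1 P2 R2 S2 : 'M[R]_(m, n)).

Local Notation Q1 := (pinv P1).
Local Notation Q2 := (pinv P2).
Local Notation X1 := (Q1 *m R1).
Local Notation Y1 := (- (Q1 *m S1)).
Local Notation X2 := (Q2 *m R2).
Local Notation Y2 := (- (Q2 *m S2)).
Local Notation e := (const_mx 1 : 'cV[R]_m).

Hypotheses (e_range : in_range A e) (Ad_ge0 : mx_nonneg (pinv A))
  (split1 : weak_regular_pds A P1 R1 S1) (split2 : regular_pds A P2 R2 S2)
  (Q2_row : no_zero_row Q2) (P2Q2_ge0 : mx_nonneg (P2 *m Q2))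
  (Q1_ge_Q2 : mx_ge Q1 Q2)
  (X_or_S : mx_ge X1 X2 \/ mx_ge (Q1 *m S1) (Q2 *m S2)).

Let defA2 : A = P2 - R2 + S2. Proof. by case: split2 => -[]. Qed.

Let null_P2A x : in_null P2 x -> in_null A x.
Proof. by case: split2 => -[_ _ nullAP2] _ _ _; move/nullAP2. Qed.

Let null_P1P2 x : in_null P1 x -> in_null P2 x.
Proof.
case: split1 => -[_ _ nullAP1] _ _ _ /nullAP1.
by case: split2 => -[_ _ nullAP2] _ _ _ /nullAP2.
Qed.

Let Q2_ge0 : mx_nonneg Q2. Proof. by case: split2. Qed.

Let X2_ge0 : mx_nonneg X2.
Proof. by case: split2 => _ _ R2_ge0 _; exact: mx_nonneg_mul. Qed.

Let Y2_ge0 : mx_nonneg Y2.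
Proof. by case: split2 => _ _ _ S2_le0; rewrite -mulmxN; exact: mx_nonneg_mul. Qed.

Let c_gt0 : mx_pos (Q2 *m e).
Proof.
move=> i j; have [k Q2ik] := Q2_row i; rewrite mxE.
apply: (@psumr_gt0 _ _ _ k) => [l|]; rewrite mxE mulr1 //.
by rewrite lt0r Q2ik Q2_ge0.
Qed.

Let iter2_sum_fix : (X2 + Y2) *m (pinv A *m e) = pinv A *m e - Q2 *m e.
Proof.
have [x0 ex0] := e_range; have [AAdA _ _ _] := pinvP A.
have AAde : A *m (pinv A *m e) = e by rewrite ex0 !mulmxA AAdA.
by rewrite (splitting_iter_sum defA2) mulmxBl mulmxA (pinv_proj_pinv null_P2A) -mulmxA AAde.
Qed.

Let z_ge0 : mx_nonneg (pinv A *m e).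
Proof. exact: mx_nonneg_mul Ad_ge0 (mx_nonneg_const ler01). Qed.

Lemma iter2_spectral_radius_lt1 : spectral_radius (companion_mx X2 Y2) < 1.
Proof. exact: companion_spectral_radius_lt1 X2_ge0 Y2_ge0 z_ge0 c_gt0 iter2_sum_fix. Qed.

Let pencil2_inv_nonneg1 : inv_nonneg (pencil X2 Y2 1).
Proof. exact: pencil1_inv_nonneg X2_ge0 Y2_ge0 z_ge0 c_gt0 iter2_sum_fix. Qed.

Let iter2_eig_bounded :
  eig_bounded (companion_mx X2 Y2) (spectral_radius (companion_mx X2 Y2)).
Proof. exact: companion_eig_bounded_spectral_radius X2_ge0 Y2_ge0 z_ge0 c_gt0 iter2_sum_fix. Qed.

Let iter2_spectral_radius_ge0 : 0 <= spectral_radius (companion_mx X2 Y2).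
Proof. exact: spectral_radius_ge0 iter2_eig_bounded. Qed.

Let pencil2_unitmx s t :
  spectral_radius (companion_mx X2 Y2) < s -> s <= t -> pencil X2 Y2 t \in unitmx.
Proof.
move=> lt_r_s le_st; apply: contraT => /companion_eigenvalue_of_singular /iter2_eig_bounded.
by rewrite normc_real; have := iter2_spectral_radius_ge0; lra.
Qed.

Let pencil2_pos_solution s :
  spectral_radius (companion_mx X2 Y2) < s -> s < 1 ->
  exists2 v, mx_pos v & s ^+ 2 *: v = Q2 *m e + (s *: (X2 *m v) + Y2 *m v).
Proof.
move=> lt_r_s lt_s1.
have s_gt0 : 0 < s by have := iter2_spectral_radius_ge0; lra.
have [unitZ invZ_ge0] : inv_nonneg (pencil X2 Y2 s).
  apply: (pencil_inv_nonneg_continuation X2_ge0 Y2_ge0 s_gt0 (ltW lt_s1) _ pencil2_inv_nonneg1).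
  by move=> t le_st _; exact: pencil2_unitmx lt_r_s le_st.
pose v := invmx (pencil X2 Y2 s) *m (Q2 *m e).
have Zv : pencil X2 Y2 s *m v = Q2 *m e by rewrite /v mulKVmx.
have v_ge0 : mx_nonneg v by apply: mx_nonneg_mul invZ_ge0 (mx_pos_nonneg c_gt0).
exists v.
  by apply: (pencil_pos_of_nonneg X2_ge0 Y2_ge0 s_gt0 v_ge0); rewrite Zv; exact: c_gt0.
by rewrite -Zv /pencil mulmxBl mul_scalar_mx mulmxDl -scalemxAl subrK.
Qed.

Let regular2_mulmx_ge0 s (v : 'cV[R]_n) :
  0 < s -> s <= 1 -> mx_nonneg v ->
  s ^+ 2 *: v = Q2 *m (e + s *: (R2 *m v) - S2 *m v) -> mx_nonneg (A *m v).
Proof.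
case: split2 => -[_ rangeAP2 _] _ R2_ge0 S2_le0; have [x0 ex0] := e_range.
have [P2Q2P2 _ _ _] := pinvP P2.
have P2Q2A : P2 *m Q2 *m A = A by apply: pinv_projK_range => y /rangeAP2.
have P2Q2e : P2 *m Q2 *m e = e by rewrite ex0 mulmxA P2Q2A.
move=> s_gt0 s_le1 v_ge0; apply: (regular_splitting_mulmx_ge0 defA2 P2Q2P2 P2Q2A P2Q2e)
  => //; exact: mx_nonneg_const ler01.
Qed.

Lemma iter1_eig_bounded s :
  spectral_radius (companion_mx X2 Y2) < s -> s < 1 -> eig_bounded (companion_mx X1 Y1) s.
Proof.
move=> lt_r_s lt_s1; have [v v_gt0 sv] := pencil2_pos_solution lt_r_s lt_s1.
have s_gt0 : 0 < s by have := iter2_spectral_radius_ge0; lra.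
have v_ge0 := mx_pos_nonneg v_gt0.
have sv_Q2 : s ^+ 2 *: v = Q2 *m (e + s *: (R2 *m v) - S2 *m v).
  by rewrite sv mulmxBr mulmxDr -scalemxAr mulNmx !mulmxA addrA.
have Av_ge0 := regular2_mulmx_ge0 s_gt0 (ltW lt_s1) v_ge0 sv_Q2.
have v_range : v = Q2 *m (s ^- 2 *: (e + s *: (R2 *m v) - S2 *m v)).
  by rewrite -scalemxAr -sv_Q2 scalerA mulVf ?scale1r // expf_neq0 // gt_eqF.
have sum_v (P Rm S : 'M[R]_(m, n)) :
    A = P - Rm + S -> (forall x, in_null P x -> in_null P2 x) ->
    pinv P *m Rm *m v + - (pinv P *m S) *m v = v - pinv P *m (A *m v).
  move=> defA nullP; rewrite -mulmxDl (splitting_iter_sum defA) mulmxBl mulmxA.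
  by rewrite {1}v_range mulmxA (pinv_proj_pinv nullP) -v_range.
case: split1 => -[defA1 _ _] _ X1_ge0 Y1_ge0.
apply: (companion_eig_bounded X1_ge0 Y1_ge0 v_gt0 s_gt0) => i.
apply: (@comparison_scalar _ s (v i 0) ((Q2 *m e) i 0) _ _ ((X2 *m v) i 0) ((Y2 *m v) i 0)
  ((Q1 *m (A *m v)) i 0) ((Q2 *m (A *m v)) i 0)).
- exact: ltW.
- exact: ltW.
- exact: ltW (c_gt0 i 0).
- exact: mx_ge_mul Q1_ge_Q2 Av_ge0 i 0.
- by move/matrixP/(_ i 0): sv; rewrite !mxE.
- by move/matrixP/(_ i 0): (sum_v _ _ _ defA1 null_P1P2); rewrite !mxE.
- by move/matrixP/(_ i 0): (sum_v _ _ _ defA2 (fun x => id)); rewrite !mxE.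
case: X_or_S => [X1X2 | S1S2]; [left | right].
  exact: mx_ge_mul X1X2 v_ge0 i 0.
by rewrite !mulNmx !mxE lerN2; have := mx_ge_mul S1S2 v_ge0 i 0; rewrite !mxE.
Qed.

Lemma iter_spectral_radius_le :
  spectral_radius (companion_mx X1 Y1) <= spectral_radius (companion_mx X2 Y2).
Proof.
set r := spectral_radius (companion_mx X2 Y2).
have r_ge0 : 0 <= r := iter2_spectral_radius_ge0.
have r_lt1 : r < 1 := iter2_spectral_radius_lt1.
apply/ler_addgt0Pr => eps eps_gt0; pose s := r + Num.min eps ((1 - r) / 2).
have : Num.min eps ((1 - r) / 2) <= eps by rewrite ge_min lexx.
have : Num.min eps ((1 - r) / 2) <= (1 - r) / 2 by rewrite ge_min lexx orbT.
have : 0 < Num.min eps ((1 - r) / 2) by rewrite lt_min eps_gt0 /=; lra.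
move=> min_gt0 min_le_half min_le_eps.
have W1_s : eig_bounded (companion_mx X1 Y1) s.
  by apply: iter1_eig_bounded; rewrite -/r /s; lra.
by apply: le_trans (spectral_radius_le _ W1_s) _; rewrite /s; lra.
Qed.

End Comparison.

Theorem theorem3p5 (R : realType) (m n : nat)
  (A P1 R1 S1 P2 R2 S2 : 'M[R]_(m, n)) :
  in_range A (const_mx 1) ->
  mx_nonneg (pinv A) ->
  weak_regular_pds A P1 R1 S1 ->
  regular_pds A P2 R2 S2 ->
  no_zero_row (pinv P2) ->
  mx_nonneg (P2 *m pinv P2) ->
  mx_ge (pinv P1) (pinv P2) ->
  (mx_ge (pinv P1 *m R1) (pinv P2 *m R2) \/ mx_ge (pinv P1 *m S1) (pinv P2 *m S2)) ->
  spectral_radius (iter_mx P1 R1 S1) <= spectral_radius (iter_mx P2 R2 S2) /\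
  spectral_radius (iter_mx P2 R2 S2) < 1.
Proof.
move=> e_range Ad_ge0 split1 split2 Q2_row P2Q2_ge0 Q1_ge_Q2 X_or_S.
split; first exact: iter_spectral_radius_le split1 split2 Q2_row P2Q2_ge0 Q1_ge_Q2 X_or_S.
exact: iter2_spectral_radius_lt1 e_range Ad_ge0 split2 Q2_row.
Qed.
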